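(* $\mathrm{Ord}$, with the structure $(\mathrm{Ord},<,\le,\underline 0,\sup,\mathrm{succ})$ induced from $\mathrm{ord}$, is an initial object in the category of $\mathfrak F$-orders: for every $\mathfrak F$-order $(E,<_E,\le_E,0_E,\sup_E,\mathrm{succ}_E)$ there is a unique morphism of $\mathfrak F$-orders $\mathrm{Ord}\to E$.
   Context: Work constructively. Let $\mathfrak F$ be a set of index sets containing $\mathbb N$ and each $\mathbb N_k=\{n\in\mathbb N:n<k\}$ ($k\ge0$), closed (up to isomorphism) under finitely enumerated subsets, sets of finitely enumerated subsets, and disjoint unions indexed by elements of $\mathfrak F$. A finitely enumerated subset of $A$ is one given by a map $\mathbb N_k\to A$; write $F\subseteq_f I$. $\mathfrak F$-orders: a structure $(E,<,\le,0_E,\sup,\mathrm{succ})$ where $<,\le$ are binary relations on $E$, $0_E\in E$, $E^*=\{\alpha\in E:0_E<\alpha\}$, $\sup$ maps each family $(\alpha_i)_{i\in I}$ with $I\in\mathfrak F$ and $\alpha_i\in E^*$ to an element of $E^*$, and $\mathrm{succ}:E\to E^*$; binary sup is defined by $\sup(0_E,\alpha)=\sup(\alpha,0_E)=\alpha$ and, for $\alpha,\beta\in E^*$, by the given $\sup$. Axioms: (1) $\alpha=\beta$ iff $\alpha\le\beta$ and $\beta\le\alpha$; (2) $0_E\le\alpha$; (3) if $\alpha<\alpha$ then $0_E=\beta$; (4) $\alpha<\beta$ implies $\alpha\le\beta$; (5) $\alpha\le\beta\le\gamma$ implies $\alpha\le\gamma$; (6) $\alpha<\beta\le\gamma$ implies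 $\alpha<\gamma$; (7) $\alpha\le\beta<\gamma$ implies $\alpha<\gamma$; (8) $\alpha<\mathrm{succ}(\beta)$ iff $\alpha\le\beta$; (9) $\mathrm{succ}(\beta)\le\alpha$ iff $\beta<\alpha$; (10) $\alpha<\gamma$ and $\beta<\gamma$ imply $\sup(\alpha,\beta)<\gamma$; (11) $\alpha<\sup(\alpha,\beta)$ implies $\alpha<\beta$; (12) $\gamma<\alpha$ and $\alpha\le\sup(\beta,\gamma)$ imply $\alpha\le\beta$; (13) for $(\alpha_i)_{i\in I}$ in $E^*$, $I\in\mathfrak F$, and $\beta\in E$: $\alpha_i\le\beta$ for all $i$ iff $\sup(\alpha_i)_{i\in I}\le\beta$; (14) if $\gamma<\beta$ for all $\gamma<\alpha$, then $\alpha\le\beta$; (15) $\alpha\le0_E$ or $0_E<\alpha$. Morphisms of $\mathfrak F$-orders are maps preserving the relations $<$, $\le$, the element $0$, $\sup$ and $\mathrm{succ}$. Ordinals: $\mathrm{ord}$ is inductively generated by $\underline 0$ and, for every family $(\alpha_i)_{i\in I}$ with $I\in\mathfrak F$, $\alpha_i\in\mathrm{ord}$, an element $\mathrm S(\alpha_i)_{i\in I}$; these form $\mathrm{ord}^*$; for such $\alpha$, $I_\alpha=I$ and $\alpha_i$ are its definitional subordinals; $I_{\underline 0}=\emptyset$. $\mathrm{succ}(\alpha)$ is $\mathrm S$ of the one-element family $(\alpha)$. For a finite list $F$ in $I_\alpha$, $\alpha_F$ is the list of the $\alpha_i$, $i\in F$. Supremum: for $(\alpha^j)_{j\in J}$ in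 $\mathrm{ord}^*$, $J\in\mathfrak F$, $\sup(\alpha^j)_{j\in J}=\mathrm S(\varepsilon_k)_{k\in K}$ with $K$ the disjoint union of the $I_{\alpha^j}$ (injections $\iota_j$) and $\varepsilon_{\iota_j(i)}=(\alpha^j)_i$. Relations between an element and a nonempty finite list, by simultaneous induction: $\alpha\le\beta^1,\dots,\beta^m$ means $\alpha_i<\beta^1,\dots,\beta^m$ for all $i\in I_\alpha$; $\alpha<\beta^1,\dots,\beta^m$ means there exist $F_1\subseteq_f I_{\beta^1},\dots,F_m\subseteq_f I_{\beta^m}$, not all empty, with $\alpha\le\beta^1_{F_1},\dots,\beta^m_{F_m}$; $\alpha\le\beta$, $\alpha<\beta$ are the case $m=1$. $\alpha=_{\mathrm{Ord}}\beta$ means $\alpha\le\beta$ and $\beta\le\alpha$; it is an equivalence relation compatible with this structure, and $\mathrm{Ord}$ is the quotient, which is an $\mathfrak F$-order. *)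

From mathcomp Require Import ssreflect ssrfun ssrbool eqtype ssrnat seq fintype.
From Stdlib Require List.

Set Implicit Arguments.
Unset Strict Implicit.
Unset Printing Implicit Defensive.

Record Iso (A B : Type) := {
  iso_to : A -> B;
  iso_from : B -> A;
  iso_tofrom : forall b, iso_to (iso_from b) = b;
  iso_fromto : forall a, iso_from (iso_to a) = a }.

(* The set  F  of index sets, as a universe of codes [code] decoded by *)
(* [El].  A finitely enumerated subset  F ⊆_f I  (a map N_k -> I) is   *)
(* represented by the list of its values, [seq (El c)].                *)
Record FUniverse := {
  code : Type;
  El : code -> Type;
  cNat : code;
  isoNat : Iso (El cNat) nat;
  cFin : nat -> code;
  isoFin : forall k, Iso (El (cFin k)) 'I_k;
  cSub : forall c, seq (El c) -> code;
  isoSub : forall c (s : seq (El c)), Iso (El (cSub s)) {x : El c | List.In x s};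
  cFsub : code -> code;
  isoFsub : forall c, Iso (El (cFsub c)) (seq (El c));
  cSig : forall c, (El c -> code) -> code;
  isoSig : forall c (J : El c -> code), Iso (El (cSig J)) {i : El c & El (J i)} }.

Arguments cFin {U} k : rename.
Arguments cSig {U} c J : rename.

(* F-orders.  A carrier with its equality (a setoid, as sets in a      *)
(* constructive setting), relations <, <=, 0, sup and succ.            *)
Record FOData (U : FUniverse) := {
  car : Type;
  feq : car -> car -> Prop;
  flt : car -> car -> Prop;
  fle : car -> car -> Prop;
  fzero : car;
  fsup : forall c : code U, (El c -> {x : car | flt fzero x}) -> car;
  fsucc : car -> car }.

Arguments feq {U} E _ _ : rename.
Arguments flt {U} E _ _ : rename.
Arguments fle {U} E _ _ : rename.
Arguments fzero {U} E : rename.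
Arguments fsup {U} E c _ : rename.
Arguments fsucc {U} E _ : rename.

Section FOrderDefs.
Variables (U : FUniverse) (E : FOData U).

Definition EStar := {x : car E | flt E (fzero E) x}.

Definition pairFam (a b : EStar) : El (cFin 2) -> EStar :=
  fun i => if nat_of_ord (iso_to (isoFin U 2) i) == 0 then a else b.

Definition IsBSup (a b s : car E) : Prop :=
  (feq E a (fzero E) /\ feq E s b) \/
  (feq E b (fzero E) /\ feq E s a) \/
  (exists (Ha : flt E (fzero E) a) (Hb : flt E (fzero E) b),
      feq E s (fsup E (cFin 2) (pairFam (exist _ a Ha) (exist _ b Hb)))).

Record IsFOrder : Prop := {
  ax1 : forall a b, feq E a b <-> fle E a b /\ fle E b a;
  ax2 : forall a, fle E (fzero E) a;
  ax3 : forall a b, flt E a a -> feq E (fzero E) b;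
  ax4 : forall a b, flt E a b -> fle E a b;
  ax5 : forall a b g, fle E a b -> fle E b g -> fle E a g;
  ax6 : forall a b g, flt E a b -> fle E b g -> flt E a g;
  ax7 : forall a b g, fle E a b -> flt E b g -> flt E a g;
  ax8 : forall a b, flt E a (fsucc E b) <-> fle E a b;
  ax9 : forall a b, fle E (fsucc E b) a <-> flt E b a;
  ax10 : forall a b g, flt E a g -> flt E b g ->
           forall s, IsBSup a b s -> flt E s g;
  ax11 : forall a b s, IsBSup a b s -> flt E a s -> flt E a b;
  ax12 : forall a b g s, flt E g a -> IsBSup b g s -> fle E a s -> fle E a b;
  ax13 : forall (c : code U) (al : El c -> EStar) (b : car E),
           (forall i, fle E (sval (al i)) b) <-> fle E (fsup E c al) b;
  ax14 : forall a b, (forall g, flt E g a -> flt E g b) -> fle E a b;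
  ax15 : forall a, fle E a (fzero E) \/ flt E (fzero E) a;
  ax_succ : forall a, flt E (fzero E) (fsucc E a) }.

End FOrderDefs.

Arguments EStar {U} E.
Arguments IsBSup {U} E a b s.
Arguments IsFOrder {U} E.

(* Morphisms of F-orders: preserve <, <=, 0, sup, succ (up to the      *)
(* equality of the target).  For sup: for every E*-family al and every  *)
(* F*-family be representing f o al, f (sup al) = sup be.               *)
Definition IsMorph (U : FUniverse) (E F : FOData U) (f : car E -> car F) : Prop :=
  (forall a b, flt E a b -> flt F (f a) (f b)) /\
  (forall a b, fle E a b -> fle F (f a) (f b)) /\
  feq F (f (fzero E)) (fzero F) /\
  (forall (c : code U) (al : El c -> EStar E) (be : El c -> EStar F),
     (forall i, feq F (sval (be i)) (f (sval (al i)))) ->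
     feq F (f (fsup E c al)) (fsup F c be)) /\
  (forall a, feq F (f (fsucc E a)) (fsucc F (f a))).

Inductive ord (U : FUniverse) : Type :=
  | O0 : ord U
  | OS : forall c : code U, (El c -> ord U) -> ord U.

Arguments O0 {U}.
Arguments OS {U} c _.

Section Ordinals.
Variable U : FUniverse.

Definition idxc (b : ord U) : code U :=
  match b with O0 => cFin 0 | OS c _ => c end.

Definition subc (b : ord U) : El (idxc b) -> ord U :=
  match b return El (idxc b) -> ord U with
  | O0 => fun _ => O0
  | OS c f => f
  end.

(* A choice of finitely enumerated subsets F_j ⊆_f I_{beta^j}, one for *)
(* each entry beta^j of a list beta^1,...,beta^m.                      *)
Fixpoint SelT (bs : seq (ord U)) : Type :=
  match bs with
  | [::] => unit
  | b :: bs' => (seq (El (idxc b)) * SelT bs')%type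
  end.

Fixpoint selList (bs : seq (ord U)) : SelT bs -> seq (ord U) :=
  match bs return SelT bs -> seq (ord U) with
  | [::] => fun _ => [::]
  | b :: bs' => fun p => map (@subc b) p.1 ++ selList p.2
  end.

Fixpoint selNonempty (bs : seq (ord U)) : SelT bs -> Prop :=
  match bs return SelT bs -> Prop with
  | [::] => fun _ => False
  | b :: bs' => fun p => (0 < size p.1)%N \/ selNonempty p.2
  end.

Fixpoint ord_le (a : ord U) (bs : seq (ord U)) {struct a} : Prop :=
  match a with
  | O0 => True
  | OS c f => forall i : El c,
      exists s : SelT bs, selNonempty s /\ ord_le (f i) (selList s)
  end.

Definition ord_lt (a : ord U) (bs : seq (ord U)) : Prop :=
  exists s : SelT bs, selNonempty s /\ ord_le a (selList s).

Definition oLe (a b : ord U) : Prop := ord_le a [:: b].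
Definition oLt (a b : ord U) : Prop := ord_lt a [:: b].
Definition oEq (a b : ord U) : Prop := oLe a b /\ oLe b a.

Definition osucc (a : ord U) : ord U := OS (cFin 1) (fun _ => a).

Definition osup (J : code U) (a : El J -> ord U) : ord U :=
  OS (cSig J (fun j => idxc (a j)))
     (fun k => let p := iso_to (isoSig (fun j => idxc (a j))) k in
               subc (projT2 p)).

Definition OrdFO : FOData U :=
  {| car := ord U;
     feq := oEq;
     flt := oLt;
     fle := oLe;
     fzero := O0;
     fsup := fun c al => osup (fun j => sval (al j));
     fsucc := osucc |}.

End Ordinals.

Arguments IsMorph {U} E F f.
Arguments OrdFO U : clear implicits.

(* Selections of finitely enumerated subsets are first traded for arbitrary nonempty
   lists of definitional subordinals; transitivity of <= and < then goes by induction
   on the left argument.  Irreflexivity and axioms (11)-(12) rest on one fact: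
   in [x <= P ++ M], a part P made of subordinals of x can be dropped.  It is proved for
   lists X in place of x, by well-founded induction for "X' is a nonempty list of
   subordinals of members of X": a subordinal y of x is handled through the list y :: P.  A binary
   supremum of a and b is at most the list a, b, which is all the axioms need of it.

   The map f(S(x_i)) := sup_i succ(f x_i) preserves <= and < by induction on the left
   argument, and every morphism agrees with f because each x equals, in Ord, the
   supremum of the successors of its definitional subordinals. *)

From Stdlib Require Import List Classical.
From mathcomp Require Import ssreflect ssrfun ssrbool eqtype ssrnat seq fintype.

Lemma In_cat {T : Type} (s t : seq T) x : In x (s ++ t) <-> In x s \/ In x t.
Proof. exact: in_app_iff. Qed.

Lemma incl_nonnil {T : Type} (s t : seq T) : incl s t -> s <> [::] -> t <> [::].
Proof. by case: s => [//|x s] /(_ x (or_introl erefl)); case: t. Qed.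

Lemma incl_cat_l {T : Type} (s t : seq T) : incl s (s ++ t).
Proof. by move=> x sx; apply/In_cat; left. Qed.

Lemma incl_cat_r {T : Type} (s t : seq T) : incl t (s ++ t).
Proof. by move=> x tx; apply/In_cat; right. Qed.

Set Implicit Arguments.
Unset Strict Implicit.
Unset Printing Implicit Defensive.

Section PairFamily.
Variables (U : FUniverse) (E : FOData U) (a b : EStar E).

Lemma pairFam_fst : pairFam a b (iso_from (isoFin U 2) ord0) = a.
Proof. by rewrite /pairFam iso_tofrom. Qed.

Lemma pairFam_snd : pairFam a b (iso_from (isoFin U 2) ord_max) = b.
Proof. by rewrite /pairFam iso_tofrom. Qed.

Lemma pairFam_cases j : pairFam a b j = a \/ pairFam a b j = b.
Proof. by rewrite /pairFam; case: ifP; [left | right]. Qed.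

End PairFamily.

Section OrdinalLists.
Variable U : FUniverse.
Implicit Types (x y : ord U) (A B C D L M N P X : seq (ord U)).

Definition subord L y : Prop := exists2 b, In b L & exists i : El (idxc b), y = subc i.
Definition subords L M : Prop := forall y, In y M -> subord L y.
(* [ltl y L] is [ord_lt y L] with the selections F_1, ..., F_m replaced by an arbitrary
   nonempty list of definitional subordinals of members of L (see [ord_ltP]). *)
Definition ltl y L : Prop := exists M, [/\ M <> [::], subords L M & ord_le y M].
Definition le_all L M : Prop := forall l, In l L -> ord_le l M.

Lemma El_cFin0 : El (@cFin U 0) -> False.
Proof. by move=> i; case: (iso_to (isoFin U 0) i). Qed.

Lemma subord_incl L L' y : incl L L' -> subord L y -> subord L' y.
Proof. by move=> sLL' [b /sLL' Lb Hy]; exists b. Qed.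

Lemma subords_incl L L' M : incl L L' -> subords L M -> subords L' M.
Proof. by move=> sLL' HM y /HM; apply: subord_incl. Qed.

Lemma subords_cat L M M' : subords L M -> subords L M' -> subords L (M ++ M').
Proof. by move=> HM HM' y /In_cat[/HM | /HM']. Qed.

Lemma subord1 x y : subord [:: x] y <-> exists i : El (idxc x), y = subc i.
Proof. by split=> [[b [Eb | []] Hy] | Hy]; [subst b | exists x => //; left]. Qed.

Lemma selList_subords L (s : SelT L) : subords L (selList s).
Proof.
elim: L s => [|b L IH] [F s] //= y /In_cat[/in_map_iff[i [<- _]] | /IH].
  by exists b; [left | exists i].
by apply: subord_incl => z; right.
Qed.

Lemma selNonemptyE L (s : SelT L) : selNonempty s <-> selList s <> [::].
Proof.
elim: L s => [|b L IH] /=; first by split=> // /(_ erefl).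
case=> [[|z F] s] /=; rewrite IH; first by split=> [[] // | ]; right.
by split=> // _; left.
Qed.

Lemma selection_cons L (s : SelT L) b (i : El (idxc b)) :
  In b L -> exists s' : SelT L, incl (subc i :: selList s) (selList s').
Proof.
elim: L s => [_ [] | b' L IH [F s] /= [Eb | Lb]].
  by subst b'; exists (i :: F, s); apply: incl_refl.
have [s' Hs'] := IH s Lb; exists (F, s') => /= y [<- | /In_cat[Fy | sy]].
- by apply/In_cat; right; apply: Hs'; left.
- by apply/In_cat; left.
- by apply/In_cat; right; apply: Hs'; right.
Qed.

Lemma selection_of_subords L M : subords L M -> exists s : SelT L, incl M (selList s).
Proof.
elim: M => [|m M IH] HM.
  elim: L {HM} => [|b L [s _]]; first by exists tt.
  by exists ([::], s).
have [|s Hs] := IH; first by move=> y My; apply: HM; right.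
have [b Lb [i ->]] := HM m (or_introl erefl).
have [s' Hs'] := selection_cons s i Lb; exists s' => y [<- | My]; apply: Hs'.
  by left.
by right; apply: Hs.
Qed.

Lemma ord_le_incl x L L' : incl L L' -> ord_le x L -> ord_le x L'.
Proof.
elim: x L L' => [//|c f IH] L L' sLL' /= Hx i.
have [s [Hs Hle]] := Hx i.
have [|s' Hs'] := @selection_of_subords L' (selList s).
  by apply: subords_incl sLL' _; apply: selList_subords.
exists s'; split; last exact: IH Hs' Hle.
by apply/selNonemptyE; exact: incl_nonnil Hs' (proj1 (selNonemptyE s) Hs).
Qed.

Lemma ord_ltP y L : ord_lt y L <-> ltl y L.
Proof.
split=> [[s [/selNonemptyE Hs Hle]] | [M [HM sM Hle]]].
  by exists (selList s); split=> //; apply: selList_subords.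
have [s Hs] := selection_of_subords sM; exists s; split; last exact: ord_le_incl Hle.
by apply/selNonemptyE; exact: incl_nonnil Hs HM.
Qed.

Lemma ord_le_OS c (f : El c -> ord U) L : ord_le (OS c f) L <-> forall i, ltl (f i) L.
Proof. by split=> H i; apply/ord_ltP; apply: H. Qed.

Lemma ord_leP x L : ord_le x L <-> forall y, subord [:: x] y -> ltl y L.
Proof.
case: x => [|c f]; first by split=> // _ y /subord1[i _]; case: (El_cFin0 i).
rewrite ord_le_OS; split=> [H y /subord1[i ->] // | H i].
by apply: H; apply/subord1; exists i.
Qed.

Lemma ord_le_refl_in x L : In x L -> ord_le x L.
Proof.
elim: x L => [//|c f IH] L Lx; apply/ord_le_OS => i.
exists [:: f i]; split=> //; last by apply: IH; left.
by move=> y [<- | []]; exists (OS c f) => //; exists i.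
Qed.

Lemma ord_le_refl x : ord_le x [:: x].
Proof. by apply: ord_le_refl_in; left. Qed.

Lemma subord_ltl L y : subord L y -> ltl y L.
Proof. by move=> Ly; exists [:: y]; split=> //; [move=> z [<- | []] | apply: ord_le_refl]. Qed.

Lemma le_all_subord L M y : le_all L M -> subord L y -> ltl y M.
Proof. by move=> HLM [b /HLM /ord_leP Hb [i ->]]; apply: Hb; apply/subord1; exists i. Qed.

Lemma ltl_all_bound N M : (forall n, In n N -> ltl n M) ->
  exists N', [/\ subords M N', le_all N N' & (N <> [::] -> N' <> [::])].
Proof.
elim: N => [|n N IH] HN; first by exists [::]; split.
have [K [HK sK leK]] := HN n (or_introl erefl).
have [|N' [sN' leN' _]] := IH; first by move=> m Nm; apply: HN; right.
exists (K ++ N'); split=> [||_]; first exact: subords_cat.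
  move=> l [<- | Nl].
  + exact: ord_le_incl (incl_cat_l K N') leK.
  + exact: ord_le_incl (incl_cat_r K N') (leN' l Nl).
exact: incl_nonnil (incl_cat_l K N') HK.
Qed.

Lemma ord_le_trans x L M : ord_le x L -> le_all L M -> ord_le x M.
Proof.
elim: x L M => [//|c f IH] L M /ord_le_OS Hx HLM; apply/ord_le_OS => i.
have [N [HN sN leN]] := Hx i.
have [|N' [sN' leNN' HN']] := @ltl_all_bound N M.
  by move=> n /sN; apply: le_all_subord.
by exists N'; split; [exact: HN' | | exact: IH leN leNN'].
Qed.

Lemma ltl_le y L : ltl y L -> ord_le y L.
Proof.
elim: y L => [//|c f IH] L [N [HN sN /ord_le_OS leN]]; apply/ord_le_OS => i.
by exists N; split=> //; apply: IH; apply: leN.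
Qed.

Lemma ltl_trans x L M : ltl x L -> le_all L M -> ltl x M.
Proof.
move=> [N [HN sN leN]] HLM.
have [|N' [sN' leNN' HN']] := @ltl_all_bound N M.
  by move=> n /sN; apply: le_all_subord.
by exists N'; split; [exact: HN' | | exact: ord_le_trans leN leNN'].
Qed.

Lemma le_ltl_trans x b M : ord_le x [:: b] -> ltl b M -> ltl x M.
Proof.
move=> Hxb [N [HN sN leN]]; exists N; split=> //.
by apply: ord_le_trans Hxb _ => l [<- | []].
Qed.

Lemma ltl_nil y : ~ ltl y [::].
Proof. by case=> [[|n N] [// _ /(_ n (or_introl erefl)) []]]. Qed.

Lemma ord_le_nil x y : ord_le x [::] -> ~ subord [:: x] y.
Proof. by move=> /ord_leP Hx /Hx /ltl_nil. Qed.

Lemma subords_cat_split A B C : subords (A ++ B) C ->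
  exists C1 C2, [/\ subords A C1, subords B C2 & incl C (C1 ++ C2)].
Proof.
elim: C => [|c C IH] HC; first by exists [::], [::]; split.
have [|C1 [C2 [sC1 sC2 sC]]] := IH; first by move=> y Cy; apply: HC; right.
have [b /In_cat[Ab | Bb] Hc] := HC c (or_introl erefl).
- exists (c :: C1), C2; split=> //.
    by move=> y [<- | /sC1]; first by exists b.
  move=> y [<- | /sC /In_cat[Hy | Hy]]; first by left.
    by right; apply/In_cat; left.
  by right; apply/In_cat; right.
- exists C1, (c :: C2); split=> //.
    by move=> y [<- | /sC2]; first by exists b.
  move=> y [<- | /sC /In_cat[Hy | Hy]]; apply/In_cat; last by right; right.
    by right; left.
  by left.
Qed.

Definition sub_step X' X : Prop := X' <> [::] /\ subords X X'.

Lemma Acc_sub_step_incl C X : incl C X -> Acc sub_step X -> Acc sub_step C.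
Proof.
move=> sCX [HX]; constructor=> D [HD sD].
by apply: HX; split=> //; apply: subords_incl sD.
Qed.

Lemma Acc_sub_step_nil : Acc sub_step [::].
Proof.
constructor=> D [HD sD].
by case: D HD sD => [//|d D] _ /(_ d (or_introl erefl)) [b []].
Qed.

Lemma Acc_sub_step_cat A B : Acc sub_step A -> Acc sub_step B -> Acc sub_step (A ++ B).
Proof.
move=> HA; elim: HA B => {}A _ IHA B HB; elim: HB => {}B _ IHB.
constructor=> C [_ /subords_cat_split[C1 [C2 [sC1 sC2 sC]]]].
apply: Acc_sub_step_incl sC _.
have AC2 : Acc sub_step C2.
  case: C2 sC2 => [_ | c2 C2 sC2]; first exact: Acc_sub_step_nil.
  by apply: Acc_sub_step_incl (incl_cat_r A _) _; apply: IHB.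
by case: C1 sC1 => [_ | c1 C1 sC1]; last exact: IHA.
Qed.

Lemma Acc_sub_step_of_singles D :
  (forall d, In d D -> Acc sub_step [:: d]) -> Acc sub_step D.
Proof.
elim: D => [|d D IH] HD; first exact: Acc_sub_step_nil.
apply: (@Acc_sub_step_cat [:: d] D); first by apply: HD; left.
by apply: IH => e De; apply: HD; right.
Qed.

Lemma sub_step_wf : well_founded sub_step.
Proof.
move=> X; apply: Acc_sub_step_of_singles => x _.
elim: x => [|c f IH]; constructor=> D [_ sD]; apply: Acc_sub_step_of_singles => d.
  by move=> /sD /subord1[i _]; case: (El_cFin0 i).
by move=> /sD /subord1[i ->]; apply: IH.
Qed.

Lemma le_all_drop_subords X P M : le_all X (P ++ M) -> subords X P -> le_all X M.
Proof.
elim/(well_founded_ind sub_step_wf): X P M => X IH P M HX sP x Xx.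
apply/ord_leP => y xy.
have Xy : subord X y by apply: subord_incl xy => z [<- | []].
have [N [HN sN leN]] := proj1 (ord_leP _ _) (HX x Xx) y xy.
have [N1 [N2 [sN1 sN2 sN12]]] := subords_cat_split sN.
have [|Q [sQ leQ _]] := @ltl_all_bound P (P ++ M).
  by move=> p /sP; apply: le_all_subord.
have [Q1 [Q2 [sQ1 sQ2 sQ12]]] := subords_cat_split sQ.
have le_yP : le_all (y :: P) (N2 ++ Q2).
  apply: (IH (y :: P)) (N1 ++ Q1) _ _ _.
  - by split=> // z [<- // | /sP].
  - move=> z [<- | Pz].
      by apply: ord_le_incl leN => w /sN12; rewrite !In_cat; tauto.
    by apply: ord_le_incl (leQ z Pz) => w /sQ12; rewrite !In_cat; tauto.
  - have sPyP : incl P (y :: P) by move=> z Pz; right.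
    by apply: subords_cat; apply: subords_incl sPyP _.
case E2: (N2 ++ Q2) le_yP => [|z Z] le_yP.
  case: N HN sN12 {leN sN} => [//|n N] _ /(_ n (or_introl erefl)).
  rewrite In_cat; case=> [/sN1[p Pp [k _]] | /(incl_cat_l N2 Q2)]; last by rewrite E2.
  by exfalso; apply: (ord_le_nil (le_yP p (or_intror Pp))); apply/subord1; exists k.
exists (z :: Z); split=> //; last by apply: le_yP; left.
by rewrite -E2; apply: subords_cat.
Qed.

Lemma ltl_cons_self x L : ltl x (x :: L) -> ltl x L.
Proof.
move=> [N [HN sN leN]].
have [N1 [N2 [sN1 sN2 sN12]]] := @subords_cat_split [:: x] L N sN.
have /(_ x (or_introl erefl)) : le_all [:: x] N2.
  apply: (@le_all_drop_subords _ N1) => // l [<- | []].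
  exact: ord_le_incl sN12 leN.
case: N2 sN2 sN12 => [_ sN12 le_x_nil | n N2 sN2 _ le_xN2]; last by exists (n :: N2).
case: N HN sN12 {sN leN} => [//|n N] _ /(_ n (or_introl erefl)) /In_cat[/sN1 xn | []].
by case: (ord_le_nil le_x_nil xn).
Qed.

Lemma ltl_irrefl x : ~ ltl x [:: x].
Proof. by move/ltl_cons_self/ltl_nil. Qed.

Lemma ord_le_drop_ltl g x L : ltl g [:: x] -> ord_le x (g :: L) -> ord_le x L.
Proof.
move=> [N [_ sN leN]] le_xgL.
suff /(_ x (or_introl erefl)) : le_all [:: x] L by [].
apply: (@le_all_drop_subords _ N) => // l [<- | []].
apply: ord_le_trans le_xgL _ => z [<- | Lz].
  exact: ord_le_incl (incl_cat_l N L) leN.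
by apply: ord_le_refl_in; apply/In_cat; right.
Qed.

End OrdinalLists.

Section OrdFOrder.
Variable U : FUniverse.
Implicit Types (a b g s x y : ord U) (L M : seq (ord U)).

Lemma le_all1 b M : le_all [:: b] M <-> ord_le b M.
Proof. by split=> [/(_ b (or_introl erefl)) // | Hb l [<- | []]]. Qed.

Lemma subord_osucc a y : subord [:: osucc a] y <-> y = a.
Proof.
split=> [/subord1[i ->] // | ->].
by apply/subord1; exists (iso_from (isoFin U 1) ord0).
Qed.

Lemma subord_osup J (al : El J -> ord U) y :
  subord [:: osup al] y <-> exists j, subord [:: al j] y.
Proof.
rewrite subord1; split=> [[k ->] | [j /subord1[i ->]]].
  exists (projT1 (iso_to (isoSig _) k)).
  by apply/subord1; exists (projT2 (iso_to (isoSig _) k)).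
by exists (iso_from (isoSig (fun j => idxc (al j))) (existT _ j i)); rewrite /= iso_tofrom.
Qed.

Lemma osucc_le b L : ord_le (osucc b) L <-> ltl b L.
Proof.
rewrite ord_leP; split=> [|Hb y /subord_osucc -> //].
by apply; apply/subord_osucc.
Qed.

Lemma ltl_osucc a b : ltl a [:: osucc b] <-> ord_le a [:: b].
Proof.
split=> [[N [_ sN leN]] | Hab]; last first.
  by exists [:: b]; split=> // y [<- | []]; apply/subord_osucc.
by apply: ord_le_incl leN => y /sN /subord_osucc ->; left.
Qed.

Lemma osup_le J (al : El J -> ord U) L :
  ord_le (osup al) L <-> forall j, ord_le (al j) L.
Proof.
rewrite ord_leP; split=> [H j | H y /subord_osup[j yj]]; last by move/ord_leP: (H j); apply.
by apply/ord_leP => y yj; apply: H; apply/subord_osup; exists j.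
Qed.

Lemma ord_le_of_ltl a b : (forall g, ltl g [:: a] -> ltl g [:: b]) -> ord_le a [:: b].
Proof. by move=> H; apply/ord_leP => y /subord_ltl /H. Qed.

Lemma ord_le_of_subords a b :
  (forall y, subord [:: a] y -> subord [:: b] y) -> ord_le a [:: b].
Proof. by move=> H; apply/ord_leP => y /H /subord_ltl. Qed.

Lemma OS_oEq_osup_osucc c (h : El c -> ord U) : oEq (OS c h) (osup (fun i => osucc (h i))).
Proof.
split; apply: ord_le_of_subords => y.
  by move=> /subord1[i ->]; apply/subord_osup; exists i; apply/subord_osucc.
by move=> /subord_osup[i /subord_osucc ->]; apply/subord1; exists i.
Qed.

Lemma bsup_le_pair a b s : IsBSup (OrdFO U) a b s -> ord_le s [:: a; b].
Proof.
have incl_b : incl [:: b] [:: a; b] by move=> y [<- | []]; right; left.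
case=> [[_ [/= le_sb _]] | [[_ [/= le_sa _]] | [Ha [Hb [/= le_s _]]]]].
- exact: ord_le_incl incl_b le_sb.
- by apply: ord_le_incl le_sa => y [<- | []]; left.
apply: ord_le_trans le_s _; apply/le_all1/osup_le => j.
by case: (@pairFam_cases U (OrdFO U) (exist _ a Ha) (exist _ b Hb) j) => ->; apply: ord_le_refl_in;
  [left | right; left].
Qed.

Lemma ord_forder : IsFOrder (OrdFO U).
Proof.
constructor=> /=; rewrite /oEq /oLt /oLe.
- by [].
- by [].
- by move=> a b /ord_ltP /ltl_irrefl.
- by move=> a b /ord_ltP /ltl_le.
- by move=> a b g le_ab le_bg; apply: ord_le_trans le_ab _; apply/le_all1.
- move=> a b g /ord_ltP lt_ab le_bg; apply/ord_ltP.
  by apply: ltl_trans lt_ab _; apply/le_all1.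
- by move=> a b g le_ab /ord_ltP lt_bg; apply/ord_ltP; apply: le_ltl_trans lt_bg.
- by move=> a b; rewrite ord_ltP ltl_osucc.
- by move=> a b; rewrite ord_ltP osucc_le.
- move=> a b g /ord_ltP[Na [HNa sNa le_aNa]] /ord_ltP[Nb [_ sNb le_bNb]] s /bsup_le_pair le_s.
  apply/ord_ltP; exists (Na ++ Nb); split; [exact: incl_nonnil (incl_cat_l Na Nb) HNa |
    exact: subords_cat |].
  apply: ord_le_trans le_s _ => l [<- | [<- | []]].
    exact: ord_le_incl (incl_cat_l Na Nb) le_aNa.
  exact: ord_le_incl (incl_cat_r Na Nb) le_bNb.
- move=> a b s /bsup_le_pair le_s /ord_ltP lt_as; apply/ord_ltP/ltl_cons_self.
  by apply: ltl_trans lt_as _ => l [<- | []].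
- move=> a b g s /ord_ltP lt_ga /bsup_le_pair le_s le_as.
  apply: (ord_le_drop_ltl lt_ga); apply: ord_le_trans le_as _ => l [<- | []].
  by apply: ord_le_incl le_s => y [<- | [<- | []]]; [right; left | left].
- by move=> c al b; rewrite osup_le.
- by move=> a b H; apply: ord_le_of_ltl => g /ord_ltP /H /ord_ltP.
- (* the one classical step: I_a is either empty or inhabited *)
  move=> a; case: (classic (exists y, subord [:: a] y)) => [[y ay] | no_sub].
    by right; apply/ord_ltP; exists [:: y]; split=> // z [<- | []].
  by left; apply/ord_leP => y ay; case: no_sub; exists y.
- by move=> a; apply/ord_ltP; exists [:: a]; split=> // z [<- | []]; apply/subord_osucc.
Qed.

End OrdFOrder.

Section InitialMorphism.
Variables (U : FUniverse) (E : FOData U) (HE : IsFOrder E).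
Implicit Types (a b c m : car E).

Lemma fle_refl a : fle E a a.
Proof. exact: (ax14 HE). Qed.

Lemma feq_le a b : feq E a b -> fle E a b.
Proof. by move/(ax1 HE)=> []. Qed.

Lemma feq_sym a b : feq E a b -> feq E b a.
Proof. by move/(ax1 HE)=> [le_ab le_ba]; apply/(ax1 HE). Qed.

Lemma feq_trans a b c : feq E a b -> feq E b c -> feq E a c.
Proof.
move/(ax1 HE)=> [le_ab le_ba] /(ax1 HE)[le_bc le_cb].
by apply/(ax1 HE); split; apply: (ax5 HE); eassumption.
Qed.

Lemma feq_of_ub a b : (forall c, fle E a c <-> fle E b c) -> feq E a b.
Proof. by move=> H; apply/(ax1 HE); split; [apply/H | apply/H]; apply: fle_refl. Qed.

Lemma fsucc_feq a b : feq E a b -> feq E (fsucc E a) (fsucc E b).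
Proof.
move/(ax1 HE)=> [le_ab le_ba].
by apply/(ax1 HE); split; apply/(ax9 HE)/(ax8 HE).
Qed.

Lemma bsup_exists a b : exists m,
  [/\ fle E a m, fle E b m & forall c, flt E a c -> flt E b c -> flt E m c].
Proof.
have feq_refl x : feq E x x by apply/(ax1 HE); split; apply: fle_refl.
have le0_feq x : fle E x (fzero E) -> feq E x (fzero E).
  by move=> Hx; apply/(ax1 HE); split=> //; apply: (ax2 HE).
case: (ax15 HE a) => [a0 | Ha].
  exists b; split; [exact: (ax5 HE a0 (ax2 HE b)) | exact: fle_refl |].
  move=> g lt_ag lt_bg; apply: (ax10 HE) lt_ag lt_bg _ _.
  by left; split; [exact: le0_feq | exact: feq_refl].
case: (ax15 HE b) => [b0 | Hb].
  exists a; split; [exact: fle_refl | exact: (ax5 HE b0 (ax2 HE a)) |].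
  move=> g lt_ag lt_bg; apply: (ax10 HE) lt_ag lt_bg _ _.
  by right; left; split; [exact: le0_feq | exact: feq_refl].
set fam := pairFam (exist _ a Ha) (exist _ b Hb).
have ub := proj2 (ax13 HE fam (fsup E _ fam)) (fle_refl _).
exists (fsup E _ fam); split=> [||g lt_ag lt_bg].
- by move: (ub (iso_from (isoFin U 2) ord0)); rewrite /fam pairFam_fst.
- by move: (ub (iso_from (isoFin U 2) ord_max)); rewrite /fam pairFam_snd.
by apply: (ax10 HE) lt_ag lt_bg _ _; right; right; exists Ha, Hb; exact: feq_refl.
Qed.

Lemma list_sup_exists (T : Type) (f : T -> car E) (s : seq T) : exists m,
  (forall y, In y s -> fle E (f y) m) /\
  (forall b, flt E (fzero E) b -> (forall y, In y s -> flt E (f y) b) -> flt E m b).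
Proof.
elim: s => [|y s [m' [ub_m' lt_m']]]; first by exists (fzero E); split.
have [m [le_ym le_m'm lt_m]] := bsup_exists (f y) m'.
exists m; split=> [z [<- // | /ub_m' le_zm'] | b b_pos lt_b]; first exact: (ax5 HE le_zm' le_m'm).
by apply: lt_m; [apply: lt_b; left | apply: lt_m' => // z sz; apply: lt_b; right].
Qed.

Fixpoint ord_init (x : ord U) : car E :=
  match x with
  | O0 => fzero E
  | OS c h => fsup E c (fun i => exist _ (fsucc E (ord_init (h i))) (ax_succ HE (ord_init (h i))))
  end.

Definition ub_img (L : seq (ord U)) b : Prop := forall l, In l L -> fle E (ord_init l) b.

Lemma ub_img1 l : ub_img [:: l] (ord_init l).
Proof. by move=> l' [<- | []]; apply: fle_refl. Qed.

Lemma ord_init_le x b :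
  fle E (ord_init x) b <-> forall y, subord [:: x] y -> fle E (fsucc E (ord_init y)) b.
Proof.
case: x => [|c h] /=.
  by split=> [_ y /subord1[i _] | _]; [case: (El_cFin0 i) | apply: (ax2 HE)].
rewrite -(ax13 HE) /=; split=> [H y /subord1[i ->] // | H i].
by apply: H; apply/subord1; exists i.
Qed.

Lemma ord_init_ltl_of_le y :
  (forall N b, ord_le y N -> ub_img N b -> fle E (ord_init y) b) ->
  forall L b, ltl y L -> ub_img L b -> flt E (ord_init y) b.
Proof.
move=> le_y L b [N [HN sN leN]] ubL.
have [m [ub_m lt_m]] := list_sup_exists ord_init N.
have lt_Nb n : In n N -> flt E (ord_init n) b.
  move=> /sN[l Ll [i En]]; apply/(ax9 HE); apply: (ax5 HE) (ubL l Ll).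
  by apply: (proj1 (ord_init_le l _) (fle_refl _)); apply/subord1; exists i.
apply: (ax7 HE (le_y N m leN ub_m)); apply: lt_m => //.
case: N HN lt_Nb {sN leN ub_m} => [//|n N] _ /(_ n (or_introl erefl)).
exact: (ax7 HE (ax2 HE _)).
Qed.

Lemma ord_init_le_ub x L b : ord_le x L -> ub_img L b -> fle E (ord_init x) b.
Proof.
elim: x L b => [|c h IH] L b le_x ubL; first exact: (ax2 HE).
apply/ord_init_le => y /subord1[i ->]; apply/(ax9 HE).
apply: (ord_init_ltl_of_le (IH i)) ubL.
by move/ord_le_OS: le_x; apply.
Qed.

Lemma ord_init_ltl_ub y L b : ltl y L -> ub_img L b -> flt E (ord_init y) b.
Proof. by apply: ord_init_ltl_of_le => N b'; apply: ord_init_le_ub. Qed.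

Lemma ord_init_morph : IsMorph (OrdFO U) E ord_init.
Proof.
split; [|split; [|split; [|split]]].
- by move=> a b /ord_ltP lt_ab; apply: ord_init_ltl_ub lt_ab (@ub_img1 b).
- by move=> a b le_ab; apply: ord_init_le_ub le_ab (@ub_img1 b).
- by apply/(ax1 HE); split; apply: fle_refl.
- move=> c al be be_al; apply: feq_of_ub => b.
  rewrite ord_init_le -(ax13 HE); split=> [H j | H y /subord_osup[j yj]].
    apply: (ax5 HE (feq_le (be_al j))); apply/ord_init_le => y yj.
    by apply: H; apply/subord_osup; exists j.
  exact: (proj1 (ord_init_le _ _) (ax5 HE (feq_le (feq_sym (be_al j))) (H j)) y yj).
- move=> a; apply: feq_of_ub => b; rewrite ord_init_le.
  by split=> [|H y /subord_osucc -> //]; apply; apply/subord_osucc.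
Qed.

Lemma ord_init_unique g : IsMorph (OrdFO U) E g -> forall x, feq E (ord_init x) (g x).
Proof.
move=> [_ [g_le [g_0 [g_sup g_succ]]]]; elim=> [|c h IH]; first exact: feq_sym g_0.
pose al i : EStar (OrdFO U) := exist _ (osucc (h i)) (ax_succ (ord_forder U) (h i)).
have [le_OS_sup le_sup_OS] := OS_oEq_osup_osucc h.
have g_OS : feq E (g (OS c h)) (g (fsup (OrdFO U) c al)).
  by apply/(ax1 HE); split; apply: g_le.
apply: feq_sym; apply: feq_trans g_OS _; apply: g_sup => i.
exact: feq_trans (fsucc_feq (IH i)) (feq_sym (g_succ _)).
Qed.

End InitialMorphism.

Theorem theorem4p10 (U : FUniverse) :
  IsFOrder (OrdFO U) /\
  forall E : FOData U, IsFOrder E ->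
    exists f : ord U -> car E,
      IsMorph (OrdFO U) E f /\
      forall g : ord U -> car E, IsMorph (OrdFO U) E g ->
        forall x : ord U, feq E (f x) (g x).
Proof.
split=> [|E HE]; first exact: ord_forder.
exists (ord_init HE); split; [exact: ord_init_morph | exact: ord_init_unique].
Qed.
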